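(* Let $X$ be a mixed-stable sequence with respect to a full BST $T$, and assume $X$ is a whole multiple of its atomic sequence. Then for every leaf $x$ of $T$, $$3^{-d(x)}\le f(x)\le 3^{-d(x)/2}.$$ If $X$ is strongly-stable, then $f(x)=2^{-d(x)}$.
   Context: $d(x)$ is the depth of $x$ in $T$, i.e. the number of edges from the root to $x$. Stable sequences. Let $T$ be a full binary search tree (every inner node has exactly two children), and let $X$ be a query sequence consisting only of keys stored at leaves of $T$. For an inner node $v$, let $X_v$ be the subsequence of $X$ consisting of the queries to keys in the subtree of $v$. - The node $v$ is strongly-stable if consecutive queries of $X_v$ alternate between the left and right subtrees of $v$. - The node $v$ is weakly-stable with a left bias if its left child $u$ is an inner node and $X_v$ repeats cyclically (from some starting phase) the pattern: a query in the left subtree of $u$, then one in the right subtree of $u$, then one in the right subtree of $v$. - Weakly-stable with a right bias is the mirror image: $u$ is the right child of $v$, and the pattern is right subtree of $u$, left subtree of $u$, left subtree of $v$. In both weakly-stable cases $u$ is called the favored child of $v$. $X$ (and $T$) is mixed-stable if every inner node of $T$ is strongly-stable or weakly-stable, and strongly-stable if every inner node is strongly-stable. Given $T$, the stability type of each inner node, and the subtree each node's pattern starts with, the stable sequence is determined up to its length. Its atomic sequence is the shortest such sequence all of whose repetitions are again such stable sequences. $X$ is a whole multiple of its atomic sequence if it is a concatenation of copies of it. For such $X$, the frequency $f(x)$ of a key $x$ is the fraction of the queries of $X$ that are equal to $x$. *)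

From HB Require Import structures.
From mathcomp Require Import all_boot all_order all_algebra.
From mathcomp Require Import reals exp.
Set Implicit Arguments. Unset Strict Implicit. Unset Printing Implicit Defensive.
Import Order.TTheory GRing.Theory Num.Theory.

Inductive tree := Leaf | Node of tree & tree.

(* Nodes are addressed by paths from the root: false = left, true = right.
   A leaf key is identified with its path; the depth d(x) is the length of
   the path. The subtree of the node at path p consists of the nodes whose
   path has p as a prefix. *)
Fixpoint subtree (t : tree) (p : seq bool) : option tree :=
  match p with
  | [::] => Some t
  | b :: p' => match t with
               | Leaf => None
               | Node l r => subtree (if b then r else l) p'
               end
  end.

Definition is_leaf (t : tree) (p : seq bool) : bool :=
  if subtree t p is Some Leaf then true else false.
Definition is_inner (t : tree) (p : seq bool) : bool :=
  if subtree t p is Some (Node _ _) then true else false.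

Definition depth (x : seq bool) : nat := size x.

Definition subseq_at (p : seq bool) (X : seq (seq bool)) := filter (prefix p) X.

Definition dir (p x : seq bool) : bool := nth false x (size p).

(* Stability type of an inner node, together with the subtree its pattern
   starts with.
   Strong b : alternation, first query in the right subtree iff b.
   WeakL k  : left bias; classes 0 = left subtree of u (u = left child),
              1 = right subtree of u, 2 = right subtree of v; the pattern
              0,1,2,0,1,2,... is followed cyclically starting at class k.
   WeakR k  : mirror image (u = right child; 0 = right subtree of u,
              1 = left subtree of u, 2 = left subtree of v). *)
Inductive stype := Strong of bool | WeakL of 'I_3 | WeakR of 'I_3.

Definition clsL (p x : seq bool) : nat :=
  if prefix (rcons p true) x then 2
  else if prefix (p ++ [:: false; false]) x then 0 else 1.
Definition clsR (p x : seq bool) : nat :=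
  if prefix (rcons p false) x then 2
  else if prefix (p ++ [:: true; true]) x then 0 else 1.

Definition node_ok (t : tree) (s : stype) (p : seq bool) (X : seq (seq bool)) : Prop :=
  let Xv := subseq_at p X in
  match s with
  | Strong b =>
      (forall i, i.+1 < size Xv ->
         dir p (nth [::] Xv i) != dir p (nth [::] Xv i.+1)) /\
      (0 < size Xv -> dir p (nth [::] Xv 0) = b)
  | WeakL k =>
      is_inner t (rcons p false) /\
      (forall i, i < size Xv -> clsL p (nth [::] Xv i) = (k + i) %% 3)
  | WeakR k =>
      is_inner t (rcons p true) /\
      (forall i, i < size Xv -> clsR p (nth [::] Xv i) = (k + i) %% 3)
  end.

Definition stable_with (t : tree) (c : seq bool -> stype) (X : seq (seq bool)) : Prop :=
  all (is_leaf t) X /\ forall p, is_inner t p -> node_ok t (c p) p X.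

Definition repeat_stable (t : tree) (c : seq bool -> stype) (A : seq (seq bool)) : Prop :=
  forall m, 0 < m -> stable_with t c (flatten (nseq m A)).

Definition atomic (t : tree) (c : seq bool -> stype) (A : seq (seq bool)) : Prop :=
  0 < size A /\ repeat_stable t c A /\
  forall B, 0 < size B -> size B < size A -> ~ repeat_stable t c B.

Definition whole_multiple_of_atomic (t : tree) (c : seq bool -> stype)
    (X : seq (seq bool)) : Prop :=
  exists A k, atomic t c A /\ 0 < k /\ X = flatten (nseq k A).

Definition freq (R : realType) (X : seq (seq bool)) (x : seq bool) : R :=
  ((count_mem x X)%:R / (size X)%:R)%R.

From HB Require Import structures.
From mathcomp Require Import all_boot all_order all_algebra.
From mathcomp Require Import reals exp.
From mathcomp Require Import zify.
Import Order.TTheory GRing.Theory Num.Theory.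
Set Implicit Arguments. Unset Strict Implicit. Unset Printing Implicit Defensive.

(* Let A be the atomic block of X, so X = A ++ ... ++ A and both A and A ++ A
   are stable.  For a node p write visits A p for the number of queries of A
   in the subtree of p.  Reading the pattern of each inner node q along the
   doubled block A ++ A forces the length of A_q to be a multiple of the
   period (2 for a strong node, 3 for a weak one), which gives exact child
   relations:
   - strong q:  visits (q b) = visits q / 2 for both children b;
   - weak q with favored child q fb:  visits (q ~fb) = visits q / 3,
     visits (q fb) = 2 visits q / 3, and both grandchildren below q fb
     receive visits q / 3.
   In particular a favored child is strong and a leaf is never favored.
   Descending from the root, each step divides visits by at most 3 (lower
   bound 3^-d), by exactly 2 in the strongly-stable case, and each step into
   a non-favored child divides the square of visits by at least 3, a step
   into a favored child being compensated by the next one (upper bound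
   3^(-d/2)).  Since f(x) = visits A x / size A for a leaf x, the theorem
   follows after transferring these nat inequalities to the reals. *)

Lemma count_nth_iota (T : Type) (x0 : T) (s : seq T) (a : pred T) (f : pred nat) :
  (forall i, i < size s -> a (nth x0 s i) = f i) ->
  count a s = count f (iota 0 (size s)).
Proof.
move=> af; rewrite -{1}(mkseq_nth x0 s) /mkseq count_map.
by apply: eq_in_count => i; rewrite mem_iota add0n => /af.
Qed.

Lemma count_iota_periodic (P : pred nat) m a :
  (forall i, P (i + m) = P i) -> count P (iota a m) = count P (iota 0 m).
Proof.
move=> Pm; elim: a => [//|a <-]; case: m Pm => [//|m] Pm.
have -> : iota a.+1 m.+1 = iota a.+1 m ++ [:: a.+1 + m].
  by rewrite -[m.+1]addn1 iotaD.
by rewrite /= count_cat /= addSnnS Pm addn0 addnC.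
Qed.

Lemma count_residue m k j n : j < m ->
  count (fun i => (k + i) %% m == j) (iota 0 (n * m)) = n.
Proof.
move=> ltjm; pose P i := i %% m == j.
have -> : count (fun i => (k + i) %% m == j) (iota 0 (n * m)) = count P (iota k (n * m)).
  by rewrite -[k in RHS]addn0 iotaDl count_map.
rewrite count_iota_periodic => [|i]; last by rewrite /P addnC modnMDl.
elim: n => [//|n IHn].
rewrite mulSnr iotaD count_cat IHn add0n count_iota_periodic => [|i]; last first.
  by rewrite /P modnDr.
rewrite (@eq_in_count _ _ (pred1 j)) => [|i]; last first.
  by rewrite mem_iota /P /= => /modn_small ->.
by rewrite count_uniq_mem ?iota_uniq // mem_iota ltjm addn1.
Qed.

(* If s ++ s follows the cyclic pattern i |-> (k + i) mod m, then m divides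
   size s (the pattern must re-enter s at its starting phase) and each of
   the m classes takes exactly a 1/m share of s. *)
Lemma cyclic_count (T : Type) (x0 : T) (s : seq T) (g : T -> nat) m k j :
  j < m ->
  (forall i, i < size (s ++ s) -> g (nth x0 (s ++ s) i) = (k + i) %% m) ->
  count (fun x => g x == j) s * m = size s.
Proof.
move=> ltjm pat.
have pat_s i : i < size s -> g (nth x0 s i) = (k + i) %% m.
  by move=> lti; rewrite -pat ?nth_cat ?lti // size_cat ltn_addr.
have m_dvd_size : size s = size s %/ m * m.
  case: (posnP (size s)) => [-> | s_pos]; first by rewrite div0n.
  have := pat (size s); rewrite size_cat -{1}[size s]addn0 ltn_add2l nth_cat ltnn subnn.
  rewrite pat_s // => /(_ s_pos)/eqP; rewrite eq_sym eqn_modDl mod0n.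
  by move=> /eqP mod0; rewrite {1}(divn_eq (size s) m) mod0 addn0.
rewrite (count_nth_iota (x0 := x0) (f := fun i => (k + i) %% m == j)) => [|i /pat_s ->//].
by rewrite {1}m_dvd_size count_residue.
Qed.

Lemma alternating_nth (T : Type) (x0 : T) (u : seq T) (f : T -> bool) b :
  (forall i, i.+1 < size u -> f (nth x0 u i) != f (nth x0 u i.+1)) ->
  (0 < size u -> f (nth x0 u 0) = b) ->
  forall i, i < size u -> f (nth x0 u i) = odd i (+) b.
Proof.
move=> alt first; elim=> [|i IHi] lti; first exact: first.
have := alt i lti; rewrite IHi ?(ltnW lti) //=.
by case: (f _); case: (odd i); case: b {first IHi}.
Qed.

Lemma bool_dichotomy (b fb : bool) : b = fb \/ b = ~~ fb.
Proof. by case: b; case: fb; [left|right|right|left]. Qed.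

Lemma prefix_rconsE (q x : seq bool) b :
  prefix (rcons q b) x = [&& prefix q x, size q < size x & dir q x == b].
Proof.
rewrite /dir; elim: q x => [|a q IHq] [|y x] //=; first by rewrite prefix0s andbT.
by rewrite IHq; case: (a == y).
Qed.

Lemma prefix_rcons_prefix (q x : seq bool) b : prefix (rcons q b) x -> prefix q x.
Proof. by rewrite prefix_rconsE => /andP[]. Qed.

Lemma prefix_rcons_dir (q x : seq bool) b : prefix (rcons q b) x -> dir q x = b.
Proof. by rewrite prefix_rconsE => /and3P[_ _ /eqP]. Qed.

Lemma subtree_cat t p z :
  subtree t (p ++ z) = if subtree t p is Some t' then subtree t' z else None.
Proof. by elim: p t => [|b p IHp] [|l r] //=; case: z. Qed.

Definition is_node (t : tree) (p : seq bool) : bool := subtree t p.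

Lemma inner_is_node t p : is_inner t p -> is_node t p.
Proof. by rewrite /is_inner /is_node; case: (subtree t p). Qed.

Lemma leaf_is_node t p : is_leaf t p -> is_node t p.
Proof. by rewrite /is_leaf /is_node; case: (subtree t p). Qed.

Lemma node_child_inner t q b : is_node t (rcons q b) -> is_inner t q.
Proof.
by rewrite /is_node -cats1 subtree_cat /is_inner; case: (subtree t q) => // [[|l r]].
Qed.

Lemma leaf_prefix_eq t x y : is_leaf t x -> is_leaf t y -> prefix x y -> y = x.
Proof.
move=> leafx leafy /prefixP[z yE]; subst y; move: leafx leafy.
rewrite /is_leaf subtree_cat.
by case: (subtree t x) => // [[|l r]] // _; case: z => // _; rewrite cats0.
Qed.

Lemma leaf_below_inner t q x : is_inner t q -> is_leaf t x -> prefix q x ->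
  size q < size x.
Proof.
move=> inq leafx /prefixP[z xE]; subst x; case: z leafx => [|b z] leafx.
  by move: inq leafx; rewrite cats0 /is_inner /is_leaf; case: (subtree t q) => // [[]].
by rewrite size_cat /= addnS ltnS leq_addr.
Qed.

Lemma leaf_child_prefix t q x b : is_inner t q -> is_leaf t x -> prefix q x ->
  prefix (rcons q b) x = (dir q x == b).
Proof.
by move=> inq leafx pqx; rewrite prefix_rconsE pqx (leaf_below_inner inq leafx pqx).
Qed.

Definition visits (A : seq (seq bool)) (p : seq bool) : nat := count (prefix p) A.

Lemma visits_root A : visits A [::] = size A.
Proof.
by rewrite /visits (eq_count (a2 := predT)) ?count_predT // => x; rewrite /= prefix0s.
Qed.

Lemma visits_block A q : visits A q = size (subseq_at q A).
Proof. by rewrite /visits size_filter. Qed.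

Lemma visits_below A q r : (forall x, prefix r x -> prefix q x) ->
  count (prefix r) (subseq_at q A) = visits A r.
Proof.
move=> rq; rewrite count_filter; apply: eq_count => x /=.
by case rx: (prefix r x); rewrite /= ?rq // andbF.
Qed.

Lemma visits_child t A q b : all (is_leaf t) A -> is_inner t q ->
  visits A (rcons q b) = count (fun x => dir q x == b) (subseq_at q A).
Proof.
move=> leafA inq; rewrite -(visits_below _ (@prefix_rcons_prefix q ^~ b)).
apply: eq_in_count => x; rewrite mem_filter => /andP[pqx xA].
exact: leaf_child_prefix inq (allP leafA x xA) pqx.
Qed.

Lemma visits_split t A q b : all (is_leaf t) A -> is_inner t q ->
  visits A (rcons q b) + visits A (rcons q (~~ b)) = visits A q.
Proof.
move=> leafA inq; rewrite !(visits_child _ leafA inq) visits_block.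
rewrite -(count_predC (fun x => dir q x == b)); congr (_ + _).
by apply: eq_count => x /=; case: (dir q x); case: b.
Qed.

Definition favored (s : stype) : option bool :=
  match s with Strong _ => None | WeakL _ => Some false | WeakR _ => Some true end.

Definition weak_class (fb : bool) (p x : seq bool) : nat :=
  if prefix (rcons p (~~ fb)) x then 2
  else if prefix (rcons (rcons p fb) fb) x then 0 else 1.

Lemma clsL_weak p x : clsL p x = weak_class false p x.
Proof. by rewrite /clsL /weak_class -!cats1 -catA. Qed.

Lemma clsR_weak p x : clsR p x = weak_class true p x.
Proof. by rewrite /clsR /weak_class -!cats1 -catA. Qed.

Lemma weak_class2 fb p x : (weak_class fb p x == 2) = prefix (rcons p (~~ fb)) x.
Proof. by rewrite /weak_class; case: ifP => //; case: ifP. Qed.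

Lemma weak_class0 fb p x :
  (weak_class fb p x == 0) = prefix (rcons (rcons p fb) fb) x.
Proof.
rewrite /weak_class; case: ifP => [/prefix_rcons_dir dx|_]; last by case: ifP.
apply/esym/negbTE/negP => /prefix_rcons_prefix/prefix_rcons_dir.
by rewrite dx; case: (fb).
Qed.

Definition favored_child (c : seq bool -> stype) (p : seq bool) : Prop :=
  exists q b, p = rcons q b /\ favored (c q) = Some b.

Section Visits.
Variables (t : tree) (c : seq bool -> stype) (A : seq (seq bool)).
Hypothesis stableAA : stable_with t c (A ++ A).

Lemma block_leaves : all (is_leaf t) A.
Proof.
by have [/allP leafAA _] := stableAA; apply/allP => x xA; rewrite leafAA ?mem_cat ?xA.
Qed.

Lemma strong_children q b : is_inner t q -> favored (c q) = None ->
  2 * visits A (rcons q b) = visits A q.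
Proof.
move=> inq; have [_ /(_ q inq)] := stableAA; rewrite /node_ok /favored.
case: (c q) => // b0 [+ +] _; rewrite /subseq_at filter_cat.
set s := filter (prefix q) A => alt first.
have pat i : i < size (s ++ s) -> (dir q (nth [::] (s ++ s) i) : nat) = (b0 + i) %% 2.
  by move=> /(alternating_nth alt first) ->; rewrite modn2 oddD oddb addbC.
have b_lt2 : b < 2 by case: b.
have := cyclic_count (g := fun x => nat_of_bool (dir q x)) b_lt2 pat.
rewrite (visits_child _ block_leaves inq) visits_block /subseq_at -/s.
move=> <-; rewrite [RHS]mulnC.
by congr (2 * _); apply: eq_count => x /=; case: (dir q x); case: (b).
Qed.

Lemma weak_pattern q fb : is_inner t q -> favored (c q) = Some fb ->
  is_inner t (rcons q fb) /\ exists k, forall i, i < size (subseq_at q (A ++ A)) ->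
    weak_class fb q (nth [::] (subseq_at q (A ++ A)) i) = (k + i) %% 3.
Proof.
move=> inq; have [_ /(_ q inq)] := stableAA; rewrite /node_ok /favored.
case: (c q) => // k [inqfb pat] [<-]; split=> //; exists k => i /pat.
  by rewrite clsL_weak.
by rewrite clsR_weak.
Qed.

Lemma weak_children q fb : is_inner t q -> favored (c q) = Some fb ->
  [/\ is_inner t (rcons q fb), 3 * visits A (rcons q (~~ fb)) = visits A q,
      3 * visits A (rcons q fb) = 2 * visits A q &
      forall b, 3 * visits A (rcons (rcons q fb) b) = visits A q].
Proof.
move=> inq fq; have [inqfb [k]] := weak_pattern inq fq.
rewrite /subseq_at filter_cat => pat.
have unfav := cyclic_count (isT : 2 < 3) pat.
have favfav := cyclic_count (isT : 0 < 3) pat.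
rewrite (eq_count (weak_class2 fb q)) -visits_block in unfav.
rewrite (eq_count (weak_class0 fb q)) -visits_block in favfav.
rewrite visits_below in unfav; last exact: (@prefix_rcons_prefix q ^~ _).
rewrite visits_below in favfav; last by move=> x /prefix_rcons_prefix/prefix_rcons_prefix.
have split_q := visits_split fb block_leaves inq.
have split_qfb := visits_split fb block_leaves inqfb.
split=> // [||b]; try lia.
by have [->|->] := bool_dichotomy b fb; lia.
Qed.
Lemma child_lower q b : is_inner t q -> visits A q <= 3 * visits A (rcons q b).
Proof.
move=> inq; case fq: (favored (c q)) => [fb|]; last first.
  by have := strong_children b inq fq; lia.
have [_ unfav fav _] := weak_children inq fq.
by have [->|->] := bool_dichotomy b fb; lia.
Qed.

Lemma visits_lower p : is_node t p -> size A <= visits A p * 3 ^ size p.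
Proof.
elim/last_ind: p => [|q b IHq] nodep; first by rewrite visits_root muln1.
have inq := node_child_inner nodep.
have := IHq (inner_is_node inq); have := child_lower b inq.
by rewrite size_rcons expnS; nia.
Qed.

Lemma visits_all_strong p : (forall q, is_inner t q -> favored (c q) = None) ->
  is_node t p -> visits A p * 2 ^ size p = size A.
Proof.
move=> strong; elim/last_ind: p => [|q b IHq] nodep; first by rewrite visits_root muln1.
have inq := node_child_inner nodep.
have := IHq (inner_is_node inq); have := strong_children b inq (strong q inq).
by rewrite size_rcons expnS; nia.
Qed.

(* A favored child is an inner node, hence never a leaf. *)
Lemma leaf_not_favored x : is_leaf t x -> ~ favored_child c x.
Proof.
move=> leafx [q [b [xE fq]]]; subst x.
have [inqb _ _ _] := weak_children (node_child_inner (leaf_is_node leafx)) fq.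
by move: inqb leafx; rewrite /is_inner /is_leaf; case: (subtree t _) => // [[]].
Qed.

Hypothesis A_nonempty : 0 < size A.

Lemma visits_pos p : is_node t p -> 0 < visits A p.
Proof. by move/visits_lower; move: A_nonempty; case: (visits A p) => //; lia. Qed.

(* The favored child of a weak node is strong: otherwise its grandchildren
   below the weak node would receive both 1/3 and 2/9 of a positive count. *)
Lemma favored_child_strong w fb : is_inner t w -> favored (c w) = Some fb ->
  favored (c (rcons w fb)) = None.
Proof.
move=> inw fw; have [inwfb _ fav grand] := weak_children inw fw.
have := visits_pos (inner_is_node inw).
case ffb: (favored (c (rcons w fb))) => [fb'|//].
have [_ unfav _ _] := weak_children inwfb ffb.
by have := grand (~~ fb'); lia.
Qed.

Lemma weak_not_favored_child q fb : is_inner t q -> favored (c q) = Some fb ->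
  ~ favored_child c q.
Proof.
move=> inq fq [w [b [qE fw]]]; subst q.
by rewrite (favored_child_strong (node_child_inner (inner_is_node inq)) fw) in fq.
Qed.

(* Upper bound on S(p) = visits^2 * 3^|p|: S(p) <= (size A)^2 unless p is a
   favored child, where only the slack 4/3 is available; the next step out
   of a favored (hence strong) child recovers the factor. *)
Lemma visits_upper p : is_node t p ->
  3 * (visits A p * visits A p * 3 ^ size p) <= 4 * (size A * size A) /\
  (~ favored_child c p -> visits A p * visits A p * 3 ^ size p <= size A * size A).
Proof.
elim/last_ind: p => [|q b IHq] nodep.
  by rewrite visits_root muln1; split=> //; lia.
have inq := node_child_inner nodep; have [IH1 IH2] := IHq (inner_is_node inq).
rewrite size_rcons expnS.
set E := 3 ^ size q; set N := size A * size A.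
case fq: (favored (c q)) => [fb|]; last first.
  have half := strong_children b inq fq.
  have tight : visits A (rcons q b) * visits A (rcons q b) * (3 * E) <= N by nia.
  by split=> [|_]; lia.
have [_ unfav fav _] := weak_children inq fq.
have [->|->] := bool_dichotomy b fb.
  split=> [|[]]; last by exists q, fb.
  by have := IH2 (weak_not_favored_child inq fq); nia.
have tight : visits A (rcons q (~~ fb)) * visits A (rcons q (~~ fb)) * (3 * E) <= N.
  by nia.
by split=> [|_]; lia.
Qed.

End Visits.

Local Open Scope ring_scope.

Lemma ratio_lower (R : realType) (v n d : nat) : (0 < n)%N -> (n <= v * 3 ^ d)%N ->
  (3 : R) ^- d <= v%:R / n%:R.
Proof.
move=> n_pos le_n; rewrite ler_pdivlMr ?ltr0n // mulrC ler_pdivrMr ?exprn_gt0 ?ltr0n //.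
by rewrite -natrX -natrM ler_nat.
Qed.

Lemma ratio_upper (R : realType) (v n d : nat) : (0 < n)%N ->
  (v * v * 3 ^ d <= n * n)%N -> v%:R / n%:R <= (3 : R) `^ (- (d%:R / 2)).
Proof.
move=> n_pos le_sq.
have sqE : ((3 : R) `^ (- (d%:R / 2))) ^+ 2 = (3 ^+ d)^-1.
  rewrite -powR_mulrn ?powR_ge0 // -powRrM mulNr divfK ?pnatr_eq0 //.
  by rewrite powR_invn.
rewrite -(ler_pXn2r (n := 2%N)) //; last 2 first.
- by rewrite qualifE /= divr_ge0.
- by rewrite qualifE /= powR_ge0.
rewrite sqE expr_div_n ler_pdivrMr ?exprn_gt0 ?ltr0n //.
rewrite mulrC ler_pdivlMr ?exprn_gt0 ?ltr0n //.
by rewrite -!natrX -natrM ler_nat !expnS !expn0 !muln1.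
Qed.

Lemma ratio_exact (R : realType) (v n d : nat) : (0 < v)%N -> (v * 2 ^ d)%N = n ->
  v%:R / n%:R = (2 : R) ^- d.
Proof.
move=> v_pos <-; rewrite natrM natrX invfM mulrA divff ?mul1r //.
by rewrite pnatr_eq0 -lt0n.
Qed.

Lemma freq_repeat_leaf (R : realType) t (A : seq (seq bool)) k x :
  (0 < k)%N -> all (is_leaf t) A -> is_leaf t x ->
  freq R (flatten (nseq k A)) x = (visits A x)%:R / (size A)%:R.
Proof.
move=> k_pos leafA leafx.
have countE : count_mem x A = visits A x.
  apply: eq_in_count => y yA /=; apply/eqP/idP => [->|]; first exact: prefix_refl.
  exact: leaf_prefix_eq leafx (allP leafA y yA).
rewrite /freq count_flatten size_flatten /shape !map_nseq !sumn_nseq countE.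
by rewrite !natrM -mulf_div divff ?mulr1 // pnatr_eq0 -lt0n.
Qed.

Unset Implicit Arguments.

Theorem lemma3 (R : realType) (t : tree) (c : seq bool -> stype)
    (X : seq (seq bool)) :
  stable_with t c X ->
  whole_multiple_of_atomic t c X ->
  (forall x, is_leaf t x ->
     (3 : R) ^- depth x <= freq R X x /\
     freq R X x <= (3 : R) `^ (- ((depth x)%:R / 2))) /\
  ((forall p, is_inner t p -> exists b, c p = Strong b) ->
   forall x, is_leaf t x -> freq R X x = (2 : R) ^- depth x).
Proof.
move=> _ [A [k [[A_nonempty [A_rep _]] [k_pos ->]]]].
have stableAA : stable_with t c (A ++ A) by have := A_rep 2%N erefl; rewrite /= cats0.
have freqE x := freq_repeat_leaf R k_pos (block_leaves stableAA) (x := x).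
split=> [x leafx | all_strong x leafx]; have nodex := leaf_is_node leafx.
- rewrite freqE //; split; first exact/ratio_lower/(visits_lower stableAA).
  apply/ratio_upper => //.
  exact: (visits_upper stableAA A_nonempty nodex).2 (leaf_not_favored stableAA leafx).
- rewrite freqE //; apply: ratio_exact; first exact: (visits_pos stableAA A_nonempty nodex).
  by apply: (visits_all_strong stableAA) nodex => q /all_strong[b ->].
Qed.
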